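(* Let $\langle X,\tau\rangle$ be a first-countable Hausdorff space containing $[0,1)$ as a dense and co-dense subset whose subspace topology is the Sorgenfrey topology on $[0,1)$ (generated by $\{[a,b)\cap[0,1)\}$). For $z\in X\setminus[0,1)$ let $\mathsf L(z)$ be the set of $x\in[0,1]$ for which there exists a sequence $p$ in $[0,1)$ converging to $z$ in $\langle X,\tau\rangle$ and converging to $x$ in $[0,1]$ with its usual Euclidean topology. Then for every $z\in X\setminus[0,1)$, $\mathsf L(z)$ is nonempty and is well-ordered by the usual order $<$ of the reals.
   Context: A subset is co-dense if its complement is dense. *)

From HB Require Import structures.
From mathcomp Require Import all_boot all_order all_algebra.
From mathcomp Require Import all_classical all_reals all_analysis.
Set Implicit Arguments. Unset Strict Implicit. Unset Printing Implicit Defensive.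
Import Order.TTheory GRing.Theory Num.Theory.
Import numFieldTopology.Exports numFieldNormedType.Exports.
Local Open Scope classical_set_scope.
Local Open Scope ring_scope.

(* A space is first countable if every point has a countable (here:
   nat-indexed, which is no loss since neighbourhood filters are nonempty)
   neighbourhood base. *)
Definition first_countable (X : topologicalType) : Prop :=
  forall x : X, exists B : nat -> set X,
    (forall n, nbhs x (B n)) /\ (forall U, nbhs x U -> exists n, B n `<=` U).

Definition I01 (R : realType) : set R := [set x : R | 0 <= x /\ x < 1].
Arguments I01 R : clear implicits.

Definition sorgenfrey_open01 (R : realType) (A : set R) : Prop :=
  A `<=` I01 R /\
  forall x, A x -> exists b, x < b /\ [set y | x <= y /\ y < b] `&` I01 R `<=` A.

Definition embeds_sorgenfrey01 (R : realType) (X : topologicalType) (i : R -> X) : Prop :=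
  {in I01 R &, injective i} /\
  forall A : set R, A `<=` I01 R ->
    (sorgenfrey_open01 A <-> exists U : set X, open U /\ i @^-1` U `&` I01 R = A).

Definition Lset (R : realType) (X : topologicalType) (i : R -> X) (z : X) : set R :=
  [set x : R | 0 <= x /\ x <= 1 /\
    exists p : nat -> R, (forall n, I01 R (p n)) /\
      ((fun n => i (p n)) @ \oo --> z) /\ (p @ \oo --> x)].

Definition well_ordered_by_le (R : realType) (S : set R) : Prop :=
  forall B, B `<=` S -> B !=set0 -> exists2 m, B m & forall y, B y -> m <= y.

From HB Require Import structures.
From mathcomp Require Import all_boot all_order all_algebra.
From mathcomp Require Import all_classical all_reals all_analysis.
From mathcomp Require Import lra.
Import Order.TTheory GRing.Theory Num.Theory.
Import numFieldTopology.Exports numFieldNormedType.Exports.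
Local Open Scope classical_set_scope.
Local Open Scope ring_scope.

(* Fix z outside the copy i[[0,1)] of the Sorgenfrey half-open interval.
   First countability yields a decreasing neighbourhood base (C n) at z,
   and every sequence built by choosing, for each k, a point of [0,1) that
   lies in C k and within 1/(k+1) of a target x converges both to z in X
   and to x in R (lemma [approximating_sequence]).
   - L(z) is nonempty: density gives points of i[[0,1)] in every C n; their
     preimages cluster at some x in the compact segment [0,1], and the
     approximation lemma produces a witness sequence for x.
   - L(z) is well ordered: if a nonempty S ⊆ L(z) had no least element,
     its infimum m would be approached from strictly above by points of
     L(z), and diagonalising gives a sequence q in [0,1) with q n > m,
     q → m and i∘q → z.  In the Sorgenfrey topology, convergence from the
     right means i∘q → i m, so by uniqueness of limits z = i m, which
     contradicts z ∉ i[[0,1)]. *)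

Definition decreasing_nbhs_base {X : topologicalType} (z : X)
    (C : nat -> set X) : Prop :=
  [/\ forall n, nbhs z (C n),
      forall m n, (m <= n)%N -> C n `<=` C m
    & forall U, nbhs z U -> exists n, C n `<=` U].

(* Intersecting the first n members of a countable base makes it decreasing. *)
Lemma decreasing_nbhs_baseP {X : topologicalType} {z : X} {B : nat -> set X} :
  (forall n, nbhs z (B n)) -> (forall U, nbhs z U -> exists n, B n `<=` U) ->
  exists C, decreasing_nbhs_base z C.
Proof.
move=> Bz Bbase; pose C n := [set y | forall j, (j <= n)%N -> B j y].
exists C; split.
- elim=> [|n IH].
    by apply: filterS (Bz 0%N) => y By j; rewrite leqn0 => /eqP ->.
  apply: filterS (filterI IH (Bz n.+1)) => y [Cy By] j.
  by rewrite leq_eqVlt => /orP[/eqP -> //|]; rewrite ltnS; apply: Cy.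
- by move=> m n mn y Cy j jm; apply: Cy; apply: leq_trans jm mn.
- by move=> U /Bbase[n BnU]; exists n => y Cy; apply/BnU/Cy.
Qed.

Lemma approximating_sequence {R : realType} {X : topologicalType} {f : R -> X}
    {z : X} {C : nat -> set X} {P : R -> Prop} {x : R} :
  decreasing_nbhs_base z C ->
  (forall k : nat, exists q, [/\ P q, `|x - q| < k.+1%:R^-1 & C k (f q)]) ->
  exists p : nat -> R, [/\ forall n, P (p n),
    (fun n => f (p n)) @ \oo --> z & p @ \oo --> x].
Proof.
move=> [_ Cdecr Cbase] /choice[p Hp]; exists p; split.
- by move=> n; case: (Hp n).
- move=> U /Cbase[j CjU]; apply: filterS (nbhs_infty_ge j) => n jn.
  by apply/CjU/(Cdecr _ _ jn); case: (Hp n).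
- apply/cvgrPdist_lt => e e0; apply: filterS (nbhs_infty_ger e^-1) => n en.
  case: (Hp n) => _ close _; apply: lt_trans close _.
  rewrite -[e]invrK ltf_pV2 ?posrE ?invr_gt0 ?ltr0n //.
  by apply: le_lt_trans en _; rewrite ltr_nat.
Qed.

Lemma Lset_nonempty {R : realType} {X : topologicalType} {i : R -> X} {z : X}
    {C : nat -> set X} :
  decreasing_nbhs_base z C -> closure (i @` I01 R) z -> Lset i z !=set0.
Proof.
move=> Cz zcl; have [Cnbhs Cdecr _] := Cz.
have /choice[p0 Hp0] : forall n, exists q, I01 R q /\ C n (i q).
  move=> n; move: zcl; rewrite closureEnbhs.
  by move=> /(_ _ _ (fun _ h => h) (Cnbhs n)) [_ [[q Iq <-] Cq]]; exists q.
have p0_01 : (p0 @ \oo) `[0, 1]%classic.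
  apply: filterS (nbhs_infty_ge 0%N) => n _; have [[q0 q1] _] := Hp0 n.
  by rewrite /= in_itv /= q0 ltW.
have [x [x01 x_cluster]] := segment_compact _ p0_01.
move: x01; rewrite /= in_itv /= => /andP[x0 x1].
suff [p [Ip pz px]] : exists p : nat -> R, [/\ forall n, I01 R (p n),
    (fun n => i (p n)) @ \oo --> z & p @ \oo --> x].
  by exists x; split => //; split => //; exists p.
apply: approximating_sequence Cz _ => k.
have tail : (p0 @ \oo) (p0 @` [set n | (k <= n)%N]).
  by apply: filterS (nbhs_infty_ge k) => n kn; exists n.
have k_gt0 : 0 < k.+1%:R^-1 :> R by rewrite invr_gt0 ltr0n.
have [_ [[n kn <-] close]] := x_cluster _ _ tail (nbhsx_ballx x _ k_gt0).
have [Ipn Cpn] := Hp0 n.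
by exists (p0 n); split => //; apply: Cdecr kn _ Cpn.
Qed.

(* A Sorgenfrey neighbourhood of m contains [m,b) ∩ [0,1), so a sequence of
   [0,1) converging to m in R from the right has image converging to i m. *)
Lemma sorgenfrey_cvg_from_right {R : realType} {X : topologicalType}
    {i : R -> X} {m : R} {q : nat -> R} :
  embeds_sorgenfrey01 i -> I01 R m -> (forall n, I01 R (q n) /\ m <= q n) ->
  q @ \oo --> m -> (fun n => i (q n)) @ \oo --> i m.
Proof.
move=> [_ sorg] Im Iq qm U; rewrite nbhsE => -[V [oV Vm] VU].
have trace_sub : i @^-1` V `&` I01 R `<=` I01 R by move=> y [].
have [_ /(_ m (conj Vm Im)) [b [mb mbV]]] :=
  (sorg _ trace_sub).2 (ex_intro _ V (conj oV erefl)).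
have /(cvgrPdist_lt _ _).1 /(_ (b - m)) := qm.
rewrite subr_gt0 => /(_ mb); apply: filterS => n.
rewrite ltr_distlC => /andP[_ qnb]; have [Iqn mqn] := Iq n.
have [Vqn _] : (i @^-1` V `&` I01 R) (q n).
  by apply: mbV; split => //; split => //; lra.
exact: VU.
Qed.

Lemma inf_Lset_right_approx {R : realType} {X : topologicalType} {i : R -> X}
    {z : X} {C : nat -> set X} {S : set R} :
  decreasing_nbhs_base z C -> S `<=` Lset i z -> has_inf S -> ~ S (inf S) ->
  exists q : nat -> R, [/\ forall n, I01 R (q n) /\ inf S < q n,
    (fun n => i (q n)) @ \oo --> z & q @ \oo --> inf S].
Proof.
move=> Cz SL hinf noSm; set m := inf S.
have mS y : S y -> m < y.
  move=> Sy; rewrite lt_neqAle ge_inf ?andbT //; last by case: hinf.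
  by apply/eqP => my; apply: noSm; rewrite -/m my.
apply: (approximating_sequence (P := fun q => I01 R q /\ m < q) Cz) => k.
pose e : R := k.+1%:R^-1 / 2.
have e0 : 0 < e by rewrite divr_gt0 // invr_gt0 ltr0n.
have k_e : k.+1%:R^-1 = e * 2 by rewrite /e mulfVK // pnatr_eq0.
have [y Sy ylt] := inf_adherent e0 hinf.
have my := mS y Sy.
have [_ [_ [p [Ip [pz py]]]]] := SL y Sy.
have near_y : \forall n \near \oo,
    C k (i (p n)) /\ `|y - p n| < Num.min e (y - m).
  apply: filterI; first by apply: pz; case: Cz.
  by apply: (cvgrPdist_lt p y).1 py _ _; rewrite lt_min e0 subr_gt0.
have [n [Ck]] := filter_ex near_y.
rewrite lt_min !ltr_distlC => /andP[/andP[a1 a2] /andP[b1 b2]].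
exists (p n); split => //; first by split => //; lra.
by rewrite k_e ltr_distlC; apply/andP; split; lra.
Qed.

(* Every nonempty S ⊆ L(z) has a least element when z ∉ i[[0,1)]: otherwise
   inf S ∈ [0,1) would be the limit of a sequence converging to z from the
   right, hence i (inf S) = z by uniqueness of limits. *)
Lemma Lset_well_ordered {R : realType} {X : topologicalType} {i : R -> X}
    {z : X} {C : nat -> set X} :
  hausdorff_space X -> embeds_sorgenfrey01 i -> decreasing_nbhs_base z C ->
  ~ (i @` I01 R) z -> well_ordered_by_le (Lset i z).
Proof.
move=> hX emb Cz zout S SL S0.
have S_ge0 : lbound S 0 by move=> y /SL[].
have hinf : has_inf S by split => //; exists 0.
have [Sm|noSm] := pselect (S (inf S)).
  by exists (inf S) => // y Sy; apply: ge_inf => //; exists 0.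
have [q [Iq qz qm]] := inf_Lset_right_approx Cz SL hinf noSm.
have Im : I01 R (inf S).
  split; first exact: lb_le_inf.
  by have [[_ q1] mq] := Iq 0%N; apply: lt_trans mq q1.
have qim : (fun n => i (q n)) @ \oo --> i (inf S).
  by apply: sorgenfrey_cvg_from_right emb Im _ qm => n; have [? /ltW] := Iq n.
case: zout; exists (inf S) => //.
exact: (@cvg_unique X hX ((fun n => i (q n)) @ \oo) _ (i (inf S)) z).
Qed.

(* Main theorem: only the density of [0,1) is needed, its co-density is not. *)
Theorem mainTheorem13 (R : realType) (X : topologicalType) (i : R -> X) :
  first_countable X -> hausdorff_space X ->
  embeds_sorgenfrey01 i ->
  closure (i @` I01 R) = setT ->
  closure (~` (i @` I01 R)) = setT ->
  forall z : X, ~ (i @` I01 R) z ->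
    Lset i z !=set0 /\ well_ordered_by_le (Lset i z).
Proof.
move=> fcX hX emb dense _ z zout.
have [B [Bz Bbase]] := fcX z.
have [C Cz] := decreasing_nbhs_baseP Bz Bbase.
split; last exact: Lset_well_ordered hX emb Cz zout.
by apply: Lset_nonempty Cz _; rewrite dense.
Qed.
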